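(* Let $p$ be an odd prime, $m=p-1$, and suppose $q=2m+1$ is also prime. Let $A_1$ be the $m\times m$ matrix with $(i,j)$ entry $ij\pmod q$, $1\le i,j\le m$, and let $E=w(A_1)/2$ (entrywise). Then $E$ is an $m\times m$ Latin hypercube design and $d_1(E)=\lfloor (m+1)m/3\rfloor$; in particular $E$ attains the upper bound on $d_1$ over all $m\times m$ LHDs.
   Context: The modified Williams transformation $w:\{0,\ldots,q-1\}\to\{0,\ldots,q-1\}$ is $w(x)=2x$ for $0\le x<q/2$ and $w(x)=2(q-x)$ for $q/2\le x<q$. ($A_1$ is the leading $m\times m$ principal submatrix of the $(2m+1)\times 2m$ good lattice point set whose $i$th row is $i\cdot(1,\ldots,2m)\pmod q$.) An $m\times m$ LHD is a matrix each of whose columns is a permutation of $\{1,\ldots,m\}$; $d_1(X)=\min_{i<j}\sum_k|x_{ik}-x_{jk}|$. *)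

From mathcomp Require Import all_boot all_order all_algebra.
Set Implicit Arguments. Unset Strict Implicit. Unset Printing Implicit Defensive.

(* Matrices are indexed by ordinals 'I_m = {0..m-1}; row/column index i
   stands for the paper's index i+1. Entries are natural numbers. *)

Definition williams (q x : nat) : nat :=
  if 2 * x < q then 2 * x else 2 * (q - x).

Definition A1 (q m : nat) : 'M[nat]_m :=
  \matrix_(i < m, j < m) (((i.+1) * (j.+1)) %% q).

Definition Emat (q m : nat) : 'M[nat]_m :=
  \matrix_(i < m, j < m) (williams q (A1 q m i j) %/ 2).

Definition is_LHD (m : nat) (X : 'M[nat]_m) : Prop :=
  forall j : 'I_m, perm_eq [seq X i j | i <- enum 'I_m] (iota 1 m).

Definition absdiff (a b : nat) : nat := (a - b) + (b - a).

Definition rowdist (m : nat) (X : 'M[nat]_m) (i j : 'I_m) : nat :=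
  \sum_(k < m) absdiff (X i k) (X j k).

(* d_1(X) = min_{i<j} rowdist X i j  (0 by convention if there are < 2 rows) *)
Definition d1 (m : nat) (X : 'M[nat]_m) : nat :=
  let s := [seq rowdist X i j | i : 'I_m <- enum 'I_m, j : 'I_m <- [seq k : 'I_m <- enum 'I_m | i < k]] in
  foldr minn (head 0 s) s.

From mathcomp Require Import all_boot all_order all_algebra.
From mathcomp Require Import zify.

Set Implicit Arguments.
Unset Strict Implicit.
Unset Printing Implicit Defensive.

(* Let g r := min (r, q - r) be the distance from r to 0 on the cycle Z/qZ;
   then w(x)/2 = g x and E i k = g (i k mod q).  For a, b prime to q let
   D a b := sum_k |g (a k) - g (b k)| and M a b := sum_k min (g (a k), g (b k)),
   k ranging over Z/qZ.  Since |x - y| + 2 min (x, y) = x + y and k |-> a k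
   permutes Z/qZ, D a b + 2 M a b = 2 G with G := sum_k g k = m (m + 1).
   The identity |g r - g s| = min (g (r - s), g (r + s)) gives
   D a b = M (a - b) (a + b), and substituting k |-> 2 k gives
   D (a - b) (a + b) = M (2 b) (2 a) = M a b.  These two relations force
   3 D a b = 2 G, and since g (-r) = g r, the row distance in E is D / 2 =
   m (m + 1) / 3 for every pair of rows.  Finally, the sum of all pairwise row
   distances of an m x m LHD only depends on m (each column is a permutation of
   1..m), so no LHD has a larger minimal distance than an equidistant one. *)

Lemma mulmod_inj q a k k' : coprime a q -> k < q -> k' < q ->
  (a * k) %% q = (a * k') %% q -> k = k'.
Proof.
move=> ca hk hk' e.
wlog le_kk' : k k' hk hk' e / k <= k'.
  move=> W; case: (leqP k k') => h; first exact: W.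
  by symmetry; apply: W => //; apply: ltnW.
have : a * k' == a * k %[mod q] by rewrite e.
rewrite eqn_mod_dvd ?leq_mul2l ?le_kk' ?orbT // -mulnBr Gauss_dvdr;
  last by rewrite coprime_sym.
by case: (posnP (k' - k)) => h; [lia | rewrite gtnNdvd //; lia].
Qed.

Lemma big_mulmod q a (F : nat -> nat) : 0 < q -> coprime a q ->
  \sum_(k < q) F ((a * k) %% q) = \sum_(k < q) F k.
Proof.
move=> q_gt0 ca.
pose h (k : 'I_q) := Ordinal (ltn_pmod (a * k) q_gt0).
have h_inj : injective h.
  move=> x y /(congr1 val) /= e; apply: val_inj.
  exact: mulmod_inj ca (ltn_ord x) (ltn_ord y) e.
by rewrite [RHS](reindex_inj h_inj).
Qed.

Lemma coprime_lt_prime q a : prime q -> 0 < a < q -> coprime a q.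
Proof. by move=> pq /andP[a_gt0 a_lt]; rewrite coprime_sym prime_coprime // gtnNdvd. Qed.

Lemma prime_ndvd_mul q x y : prime q -> 0 < x < q -> 0 < y < q -> ~~ (q %| x * y).
Proof.
move=> pq /andP[x_gt0 x_lt] /andP[y_gt0 y_lt].
by rewrite Euclid_dvdM // negb_or !gtnNdvd.
Qed.

Lemma modn_lt_double q z : z < 2 * q -> z %% q = if z < q then z else z - q.
Proof.
move=> hz; case: ifP => h; first by rewrite modn_small.
have -> : z = (z - q) + q by lia.
rewrite modnDr modn_small //; lia.
Qed.

Lemma modnB_add_compl q x y : 0 < q -> y <= x ->
  (x %% q + (q - y %% q)) %% q = (x - y) %% q.
Proof.
move=> q_gt0 le_yx; rewrite -{1}(subnK le_yx) modnDml -addnA.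
have -> : y + (q - y %% q) = (y %/ q).+1 * q.
  by rewrite {1}(divn_eq y q) mulSn; have := ltn_pmod y q_gt0; lia.
by rewrite addnC modnMDl.
Qed.

Definition cnorm (q r : nat) : nat := if 2 * r < q then r else q - r.

Lemma williams_half q x : williams q x %/ 2 = cnorm q x.
Proof. by rewrite /williams /cnorm; case: ifP => _; rewrite mulKn. Qed.

Lemma cnorm_modN q x y : 0 < q -> (x + y) %% q = 0 ->
  cnorm q (x %% q) = cnorm q (y %% q).
Proof.
move=> q_gt0; rewrite -modnDm.
have := ltn_pmod x q_gt0; have := ltn_pmod y q_gt0.
move: (x %% q) (y %% q) => r s hs hr; rewrite modn_lt_double; last by lia.
rewrite /cnorm; case: ifP => h1; case: ifP => h2; case: ifP => h3; lia.
Qed.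

Lemma absdiff_cnorm q r s : r < q -> s < q ->
  absdiff (cnorm q r) (cnorm q s) =
  minn (cnorm q ((r + (q - s)) %% q)) (cnorm q ((r + s) %% q)).
Proof.
move=> hr hs; rewrite !modn_lt_double; try lia.
case: ifP => h1; case: ifP => h2; rewrite /absdiff /cnorm;
  case: ifP => h3; case: ifP => h4; case: ifP => h5; case: ifP => h6; lia.
Qed.

Lemma cnorm_range q r : 0 < r < q -> 0 < cnorm q r /\ 2 * cnorm q r <= q.
Proof. by rewrite /cnorm; case: ifP; lia. Qed.

Lemma cnorm_inj q r s : r < q -> s < q ->
  cnorm q r = cnorm q s -> r = s \/ r + s = q.
Proof. by rewrite /cnorm; case: ifP => h1; case: ifP => h2; lia. Qed.

Lemma big_ord_odd_sym m (phi : nat -> nat) : phi 0 = 0 ->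
  (forall k, 0 < k < 2 * m + 1 -> phi (2 * m + 1 - k) = phi k) ->
  \sum_(k < 2 * m + 1) phi k = 2 * \sum_(k < m) phi k.+1.
Proof.
move=> phi0 phi_sym.
have -> : 2 * m + 1 = (m + m).+1 by lia.
rewrite big_ord_recl phi0 add0n big_split_ord /= mul2n -addnn; congr (_ + _).
rewrite (reindex_inj rev_ord_inj) /=; apply: eq_bigr => i _.
have i_lt := ltn_ord i; rewrite /bump /= -phi_sym; last by lia.
by congr phi; lia.
Qed.

Definition cnorm_sum q := \sum_(k < q) cnorm q k.

Lemma cnorm_sum_odd m : cnorm_sum (2 * m + 1) = m * (m + 1).
Proof.
rewrite /cnorm_sum (@big_ord_odd_sym m (cnorm (2 * m + 1))); first last.
- move=> k /andP[k_gt0 k_lt].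
  have sub_lt : 2 * m + 1 - k < 2 * m + 1 by lia.
  rewrite -[in RHS](modn_small k_lt) -[in LHS](modn_small sub_lt).
  apply: cnorm_modN; first by lia.
  by rewrite subnK ?modnn // ltnW.
- by rewrite /cnorm addn1.
rewrite (eq_bigr (fun k : 'I_m => k.+1)); last first.
  by move=> k _; have := ltn_ord k; rewrite /cnorm; case: ifP; lia.
elim: m => [|n IH]; first by rewrite big_ord0.
by rewrite big_ord_recr /= mulnDr IH; lia.
Qed.

(* Folded good lattice points: row [a] of w(glp)/2, the column index [k]
   ranging over all of Z/qZ. *)
Definition fglp q a k := cnorm q ((a * k) %% q).

Definition fglp_dist q a b := \sum_(k < q) absdiff (fglp q a k) (fglp q b k).

Definition fglp_minsum q a b := \sum_(k < q) minn (fglp q a k) (fglp q b k).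

Lemma fglp_distC q a b : fglp_dist q a b = fglp_dist q b a.
Proof. by apply: eq_bigr => k _; rewrite /absdiff addnC. Qed.

Lemma fglp_dist_minsum q a b : 0 < q -> coprime a q -> coprime b q ->
  fglp_dist q a b + 2 * fglp_minsum q a b = 2 * cnorm_sum q.
Proof.
move=> q_gt0 ca cb.
rewrite /fglp_dist /fglp_minsum big_distrr -big_split /=.
rewrite (eq_bigr (fun k : 'I_q => fglp q a k + fglp q b k)); last first.
  by move=> k _; rewrite /absdiff; lia.
rewrite big_split /= /fglp !(@big_mulmod q _ (cnorm q)) // /cnorm_sum; lia.
Qed.

Lemma fglp_dist_subD q a b : 0 < q -> b <= a ->
  fglp_dist q a b = fglp_minsum q (a - b) (a + b).
Proof.
move=> q_gt0 le_ba; apply: eq_bigr => k _.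
rewrite /fglp absdiff_cnorm ?ltn_pmod // modnDm mulnDl mulnBl.
by rewrite modnB_add_compl // leq_mul2r le_ba orbT.
Qed.

Lemma fglp_minsum_double q a b : 0 < q -> coprime 2 q ->
  fglp_minsum q (2 * b) (2 * a) = fglp_minsum q a b.
Proof.
move=> q_gt0 c2; rewrite /fglp_minsum.
rewrite -(@big_mulmod q 2 (fun j => minn (fglp q a j) (fglp q b j))) //.
apply: eq_bigr => k _.
by rewrite /fglp !modnMmr !mulnA [b * 2]mulnC [a * 2]mulnC minnC.
Qed.

Lemma fglp_dist_equidistant q a b : prime q -> 0 < b < a -> a + b < q ->
  3 * fglp_dist q a b = 2 * cnorm_sum q.
Proof.
move=> pq /andP[b_gt0 lt_ba] lt_abq.
have q_gt0 : 0 < q by lia.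
have cop x : 0 < x < q -> coprime x q by apply: coprime_lt_prime.
have Ea : fglp_dist q a b + 2 * fglp_minsum q a b = 2 * cnorm_sum q.
  by apply: fglp_dist_minsum => //; apply: cop; lia.
have Eab : fglp_dist q (a - b) (a + b) + 2 * fglp_minsum q (a - b) (a + b)
           = 2 * cnorm_sum q.
  by apply: fglp_dist_minsum => //; apply: cop; lia.
have Da : fglp_dist q a b = fglp_minsum q (a - b) (a + b).
  by apply: fglp_dist_subD => //; lia.
have Dab : fglp_dist q (a - b) (a + b) = fglp_minsum q a b.
  rewrite fglp_distC fglp_dist_subD //; last by lia.
  have -> : a + b - (a - b) = 2 * b by lia.
  have -> : a + b + (a - b) = 2 * a by lia.
  by apply: fglp_minsum_double => //; apply: cop; lia.
lia.
Qed.

Lemma fglp_sym q a k : k < q -> fglp q a (q - k) = fglp q a k.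
Proof.
move=> k_lt; apply: cnorm_modN; first by lia.
by rewrite -mulnDr subnK ?modnMl // ltnW.
Qed.

Lemma fglp0 q a : 0 < q -> fglp q a 0 = 0.
Proof. by move=> q_gt0; rewrite /fglp muln0 mod0n /cnorm muln0 q_gt0. Qed.

Lemma Emat_fglp q m (i k : 'I_m) : Emat q m i k = fglp q i.+1 k.+1.
Proof. by rewrite !mxE williams_half. Qed.

Lemma rowdistC m (X : 'M[nat]_m) i j : rowdist X i j = rowdist X j i.
Proof. by apply: eq_bigr => k _; rewrite /absdiff addnC. Qed.

Lemma rowdist_id m (X : 'M[nat]_m) i : rowdist X i i = 0.
Proof. by rewrite /rowdist big1 // => k _; rewrite /absdiff subnn. Qed.

Lemma Emat_rowdist_fglp m (i j : 'I_m) :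
  2 * rowdist (Emat (2 * m + 1) m) i j = fglp_dist (2 * m + 1) i.+1 j.+1.
Proof.
rewrite /fglp_dist (@big_ord_odd_sym m (fun k => absdiff (fglp _ i.+1 k) (fglp _ j.+1 k))).
- by congr (2 * _); apply: eq_bigr => k _; rewrite !Emat_fglp.
- by rewrite !fglp0 ?addn1.
- by move=> k /andP[_ k_lt]; rewrite !fglp_sym.
Qed.

Lemma Emat_rowdist m (i j : 'I_m) : prime (2 * m + 1) -> i != j ->
  rowdist (Emat (2 * m + 1) m) i j = (m + 1) * m %/ 3.
Proof.
move=> pq; wlog lt_ij : i j / i < j => [W | _].
  rewrite neq_ltn => /orP[] lt; first by rewrite W // neq_ltn lt.
  by rewrite rowdistC W // neq_ltn lt.
have j_lt := ltn_ord j.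
have E3 : 3 * fglp_dist (2 * m + 1) j.+1 i.+1 = 2 * cnorm_sum (2 * m + 1).
  by apply: fglp_dist_equidistant => //; lia.
rewrite -Emat_rowdist_fglp rowdistC cnorm_sum_odd in E3.
have -> : (m + 1) * m = 3 * rowdist (Emat (2 * m + 1) m) i j by lia.
by rewrite mulKn.
Qed.

Lemma LHD_of_col_inj m (X : 'M[nat]_m) :
  (forall j, injective (X ^~ j)) -> (forall i j, 0 < X i j <= m) -> is_LHD X.
Proof.
move=> X_inj X_range j.
have col_uniq : uniq [seq X i j | i <- enum 'I_m] by rewrite map_inj_uniq ?enum_uniq.
have col_sub : {subset [seq X i j | i <- enum 'I_m] <= iota 1 m}.
  by move=> x /mapP[i _ ->]; rewrite mem_iota; have := X_range i j; lia.
have col_size : size (iota 1 m) <= size [seq X i j | i <- enum 'I_m].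
  by rewrite size_iota size_map size_enum_ord.
have [_ col_eq] := uniq_min_size col_uniq col_sub col_size.
by apply: uniq_perm; rewrite ?iota_uniq.
Qed.

Lemma Emat_LHD m : prime (2 * m + 1) -> is_LHD (Emat (2 * m + 1) m).
Proof.
move=> pq; have q_gt0 : 0 < 2 * m + 1 by lia.
have nz x (j : 'I_m) : 0 < x < 2 * m + 1 -> (x * j.+1) %% (2 * m + 1) != 0.
  by move=> x_range; apply: prime_ndvd_mul => //; have := ltn_ord j; lia.
apply: LHD_of_col_inj => [j i i' | i j]; rewrite !Emat_fglp /fglp.
- have [i_lt i'_lt] := (ltn_ord i, ltn_ord i').
  move/cnorm_inj => /(_ (ltn_pmod _ q_gt0) (ltn_pmod _ q_gt0)) [e | e].
  + apply/val_inj/succn_inj; move: e; rewrite ![_ * j.+1]mulnC.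
    apply: mulmod_inj; [apply: coprime_lt_prime; have := ltn_ord j | |]; lia.
  + have : ((i.+1 + i'.+1) * j.+1) %% (2 * m + 1) != 0 by apply: nz; lia.
    by rewrite mulnDl -modnDm e modnn.
- have := @cnorm_range (2 * m + 1) ((i.+1 * j.+1) %% (2 * m + 1)).
  rewrite lt0n nz ?ltn_pmod //=; last by have := ltn_ord i; lia.
  by case; lia.
Qed.

Definition d1_seq m (X : 'M[nat]_m) : seq nat :=
  [seq rowdist X i j | i : 'I_m <- enum 'I_m, j : 'I_m <- [seq k : 'I_m <- enum 'I_m | i < k]].

Lemma d1E m (X : 'M[nat]_m) : d1 X = foldr minn (head 0 (d1_seq X)) (d1_seq X).
Proof. by []. Qed.

Lemma d1_seqP m (X : 'M[nat]_m) y :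
  reflect (exists i j : 'I_m, i < j /\ y = rowdist X i j) (y \in d1_seq X).
Proof.
apply: (iffP allpairsPdep) => [[i [j [_ j_in ->]]] | [i [j [lt_ij ->]]]].
  by exists i, j; move: j_in; rewrite mem_filter => /andP[].
by exists i, j; rewrite mem_enum mem_filter lt_ij mem_enum.
Qed.

Lemma foldr_minn_le (s : seq nat) x0 y : y \in s -> foldr minn x0 s <= y.
Proof.
elim: s => //= z s IH; rewrite in_cons => /orP[/eqP -> | y_in].
  exact: geq_minl.
by rewrite geq_min IH ?orbT.
Qed.

Lemma foldr_minn_const (s : seq nat) x0 c :
  x0 = c -> {in s, forall y, y = c} -> foldr minn x0 s = c.
Proof.
move=> ->; elim: s => //= y s IH s_c.
have -> : y = c by apply: s_c; rewrite mem_head.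
by rewrite IH ?minnn // => z z_in; apply: s_c; rewrite in_cons z_in orbT.
Qed.

Lemma d1_le m (X : 'M[nat]_m) (i j : 'I_m) : i != j -> d1 X <= rowdist X i j.
Proof.
rewrite neq_ltn d1E => /orP[] lt; apply: foldr_minn_le; apply/d1_seqP.
  by exists i, j.
by exists j, i; rewrite rowdistC.
Qed.

Lemma d1_equidistant m (X : 'M[nat]_m) c : 1 < m ->
  (forall i j : 'I_m, i != j -> rowdist X i j = c) -> d1 X = c.
Proof.
move=> m_gt1 X_c.
have seq_c : {in d1_seq X, forall y, y = c}.
  by move=> y /d1_seqP[i [j [lt_ij ->]]]; rewrite X_c // neq_ltn lt_ij.
have : rowdist X (Ordinal (ltnW m_gt1)) (Ordinal m_gt1) \in d1_seq X.
  by apply/d1_seqP; exists (Ordinal (ltnW m_gt1)), (Ordinal m_gt1).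
rewrite d1E; case: (d1_seq X) seq_c => // y s seq_c _.
by apply: foldr_minn_const => //; apply: seq_c; rewrite mem_head.
Qed.

Lemma sum_rowdist_LHD m (X : 'M[nat]_m) : is_LHD X ->
  \sum_(i < m) \sum_(j < m) rowdist X i j =
  m * \sum_(x <- iota 1 m) \sum_(y <- iota 1 m) absdiff x y.
Proof.
move=> LX.
have col_sum k (F : nat -> nat) : \sum_(i < m) F (X i k) = \sum_(x <- iota 1 m) F x.
  by rewrite -(perm_big _ (LX k)) big_map big_enum.
rewrite /rowdist (eq_bigr (fun i : 'I_m => \sum_(k < m) \sum_(j < m) absdiff (X i k) (X j k)));
  last by move=> i _; rewrite exchange_big.
rewrite exchange_big /= -[X in X * _]card_ord -sum_nat_const.
apply: eq_bigr => k _; rewrite (col_sum k (fun x => \sum_(j < m) absdiff x (X j k))).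
apply: eq_bigr => x _.
exact: col_sum (absdiff x).
Qed.

Lemma d1_LHD_le_equidistant m (X Y : 'M[nat]_m) c : 1 < m ->
  is_LHD X -> is_LHD Y -> (forall i j : 'I_m, i != j -> rowdist Y i j = c) ->
  d1 X <= c.
Proof.
move=> m_gt1 LX LY Y_c.
have offdiag (Z : 'M[nat]_m) : \sum_(i < m) \sum_(j < m | j != i) rowdist Z i j =
                               \sum_(i < m) \sum_(j < m) rowdist Z i j.
  by apply: eq_bigr => i _; rewrite [RHS](bigD1 i) //= rowdist_id.
have offdiag_const d : \sum_(i < m) \sum_(j < m | j != i) d = m * (m - 1) * d.
  under eq_bigr do rewrite sum_nat_const cardC1 card_ord.
  by rewrite sum_nat_const card_ord mulnA subn1.
rewrite -(@leq_pmul2l (m * (m - 1))) ?muln_gt0; last by lia.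
rewrite -!offdiag_const.
apply: (@leq_trans (\sum_(i < m) \sum_(j < m | j != i) rowdist X i j)).
  by apply: leq_sum => i _; apply: leq_sum => j ji; apply: d1_le; rewrite eq_sym.
rewrite offdiag sum_rowdist_LHD // -(sum_rowdist_LHD LY) -offdiag.
by apply/eq_leq/eq_bigr => i _; apply: eq_bigr => j ji; rewrite Y_c // eq_sym.
Qed.

Theorem corollary1 (p m q : nat) :
  prime p -> odd p -> m = p - 1 -> q = 2 * m + 1 -> prime q ->
  [/\ is_LHD (Emat q m),
      d1 (Emat q m) = ((m + 1) * m) %/ 3
    & forall X : 'M[nat]_m, is_LHD X -> d1 X <= d1 (Emat q m)].
Proof.
move=> pp odd_p -> -> pq.
have m_gt1 : 1 < p - 1.
  have := prime_gt1 pp; have : p != 2 by apply: contraTneq odd_p => ->.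
  lia.
have LE := Emat_LHD pq.
have d1E_val := d1_equidistant m_gt1 (fun i j => Emat_rowdist pq).
split=> // X LX; rewrite d1E_val.
exact: d1_LHD_le_equidistant m_gt1 LX LE (fun i j => Emat_rowdist pq).
Qed.
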